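(* Let $\mathcal{M}$ be a saturated model of Presburger arithmetic, $\mathcal{M}_0\preceq\mathcal{M}$ a small elementary submodel, and $C\subseteq\mathcal{M}^2$ a $(1,1)$-cell definable over $\mathcal{M}_0$. Let $(a,b)\in C$ with $\dim((a,b)/\mathcal{M}_0)=2$. Then there is a definable box $B$ around $(a,b)$ with $B\subseteq C$.
   Context: Presburger arithmetic is $\mathrm{Th}(\mathbb{Z},+,-,<,0,1,\{\equiv_n\}_n)$. A $B$-linear function is $f(x)=\sum_i s_i\frac{x_i-c_i}{k_i}+\gamma$ with $s_i,k_i,c_i$ integers, $0\le c_i<k_i$, $x_i\equiv_{k_i}c_i$, and $\gamma\in\mathrm{dcl}(B)$. A $B$-definable $1$-cell is an infinite set $\{x: \alpha\ \square_1\ x\ \square_2\ \beta,\ x\equiv_N c\}$ with $\alpha,\beta\in\mathrm{dcl}(B)$, $0\le c<N$ integers and each $\square_j$ either $\le$ or no condition. A $(1,1)$-cell is a set $\{(x,t): x\in D,\ \alpha(x)\ \square_1\ t\ \square_2\ \beta(x),\ t\equiv_N k\}$ with $D$ a $1$-cell, $\alpha,\beta$ $B$-linear functions on $D$, $0\le k<N$ integers, such that the fiber sizes are not uniformly bounded by a natural number. The dimension of a tuple over $\mathcal{M}_0$ is the size of a maximal dcl-independent subset of its coordinates over $\mathcal{M}_0$. A box around a point $p\in\mathcal{M}^n$ is a product $B_1\times\dots\times B_n$ of sets $B_i=\{x:\alpha_i\ \square_1\ x\ \square_2\ \beta_i,\ x\equiv_{N_i}c_i\}$ with $p_i\in B_i$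 and both $[\alpha_i,p_i]$ and $[p_i,\beta_i]$ infinite. *)

From Stdlib Require Import ZArith List.
Import ListNotations.

Set Implicit Arguments.

Record PStruct := {
  car :> Type;
  padd : car -> car -> car;
  popp : car -> car;
  pzero : car;
  pone : car;
  plt : car -> car -> Prop;
  pcong : nat -> car -> car -> Prop }.

Inductive term (T : Type) : Type :=
| TVar : nat -> term T
| TPar : T -> term T
| TZero : term T
| TOne : term T
| TAdd : term T -> term T -> term T
| TOpp : term T -> term T.

Inductive form (T : Type) : Type :=
| FEq : term T -> term T -> form T
| FLt : term T -> term T -> form T
| FCong : nat -> term T -> term T -> form T
| FFalse : form T
| FNot : form T -> form T
| FAnd : form T -> form T -> form T
| FOr : form T -> form T -> form T
| FImp : form T -> form T -> form T
| FEx : nat -> form T -> form T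
| FAll : nat -> form T -> form T.

Arguments TZero {T}. Arguments TOne {T}. Arguments FFalse {T}.

Section Sem.
Variables (M : PStruct) (T : Type) (ip : T -> car M).

Fixpoint teval (e : nat -> car M) (t : term T) : car M :=
  match t with
  | TVar _ n => e n
  | TPar p => ip p
  | TZero => pzero M
  | TOne => pone M
  | TAdd u v => padd M (teval e u) (teval e v)
  | TOpp u => popp M (teval e u)
  end.

Definition upd (e : nat -> car M) (i : nat) (x : car M) : nat -> car M :=
  fun j => if Nat.eqb j i then x else e j.

Fixpoint sat (e : nat -> car M) (f : form T) : Prop :=
  match f with
  | FEq u v => teval e u = teval e v
  | FLt u v => plt M (teval e u) (teval e v)
  | FCong n u v => pcong M n (teval e u) (teval e v)
  | FFalse => False
  | FNot g => ~ sat e g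
  | FAnd g h => sat e g /\ sat e h
  | FOr g h => sat e g \/ sat e h
  | FImp g h => sat e g -> sat e h
  | FEx i g => exists x, sat (upd e i x) g
  | FAll i g => forall x, sat (upd e i x) g
  end.
End Sem.
Arguments sat M {T} ip e f.
Arguments teval M {T} ip e t.

Fixpoint tparams_in (T : Type) (A : T -> Prop) (t : term T) : Prop :=
  match t with
  | TVar _ _ | TZero | TOne => True
  | TPar p => A p
  | TAdd u v => tparams_in A u /\ tparams_in A v
  | TOpp u => tparams_in A u
  end.

Fixpoint fparams_in (T : Type) (A : T -> Prop) (f : form T) : Prop :=
  match f with
  | FEq u v | FLt u v | FCong _ u v => tparams_in A u /\ tparams_in A v
  | FFalse => True
  | FNot g => fparams_in A g
  | FAnd g h | FOr g h | FImp g h => fparams_in A g /\ fparams_in A h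
  | FEx _ g | FAll _ g => fparams_in A g
  end.

Definition noparam (M : PStruct) : Empty_set -> car M :=
  fun x => match x with end.

Definition Zstruct : PStruct := {|
  car := Z; padd := Z.add; popp := Z.opp; pzero := 0%Z; pone := 1%Z;
  plt := Z.lt;
  pcong := fun n x y => exists q : Z, (x - y = Z.of_nat n * q)%Z |}.

Definition presburger_model (M : PStruct) : Prop :=
  forall phi : form Empty_set,
    (forall e, sat Zstruct (noparam Zstruct) e phi) ->
    (forall e, sat M (noparam M) e phi).

Definition elem_emb (M0 M : PStruct) (f : car M0 -> car M) : Prop :=
  forall (phi : form Empty_set) (e : nat -> car M0),
    sat M0 (noparam M0) e phi <-> sat M (noparam M) (fun n => f (e n)) phi.

Definition img (M0 M : PStruct) (f : car M0 -> car M) : car M -> Prop :=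
  fun x => exists y, f y = x.

Arguments img {M0 M}.

(** Formulas in one variable with parameters in M, evaluated at x
    (every variable is interpreted as x). *)
Definition sat1 (M : PStruct) (phi : form (car M)) (x : car M) : Prop :=
  sat M (fun p => p) (fun _ => x) phi.

Arguments sat1 {M}.

Definition smaller (M : PStruct) (X : Type) : Prop :=
  ~ exists g : car M -> X, forall x y, g x = g y -> x = y.

Definition saturated (M : PStruct) : Prop :=
  forall (A : car M -> Prop), smaller M {x : car M | A x} ->
  forall (p : form (car M) -> Prop),
    (forall phi, p phi -> fparams_in A phi) ->
    (forall l : list (form (car M)), (forall phi, In phi l -> p phi) ->
       exists x, forall phi, In phi l -> sat1 phi x) ->
    exists x, forall phi, p phi -> sat1 phi x.

Definition dcl (M : PStruct) (A : car M -> Prop) (x : car M) : Prop :=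
  exists phi : form (car M), fparams_in A phi /\
    forall y, sat1 phi y <-> y = x.

Arguments dcl {M}.

Fixpoint nmul (M : PStruct) (n : nat) (x : car M) : car M :=
  match n with
  | O => pzero M
  | S m => padd M x (nmul M m x)
  end.

Arguments nmul {M}.

Definition zmul (M : PStruct) (s : Z) (x : car M) : car M :=
  match s with
  | Z0 => pzero M
  | Zpos p => nmul (Pos.to_nat p) x
  | Zneg p => popp M (nmul (Pos.to_nat p) x)
  end.

Arguments zmul {M}.

Definition nat_el (M : PStruct) (n : nat) : car M := nmul n (pone M).
Definition psub (M : PStruct) (x y : car M) : car M := padd M x (popp M y).
Definition ple (M : PStruct) (x y : car M) : Prop := plt M x y \/ x = y.

(** (Externally) infinite subset. *)
Definition infinite (M : PStruct) (S : car M -> Prop) : Prop :=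
  ~ exists l : list (car M), forall x, S x -> In x l.

Arguments infinite {M}.

Definition lbok (M : PStruct) (o : option (car M)) (x : car M) : Prop :=
  match o with Some a => ple M a x | None => True end.
Definition ubok (M : PStruct) (o : option (car M)) (x : car M) : Prop :=
  match o with Some b => ple M x b | None => True end.

Arguments lbok {M}.
Arguments ubok {M}.

Definition one_cell (M : PStruct) (A : car M -> Prop) (D : car M -> Prop) : Prop :=
  exists (lo hi : option (car M)) (N c : nat),
    (forall a, lo = Some a -> dcl A a) /\
    (forall b, hi = Some b -> dcl A b) /\
    (0 < N)%nat /\ (c < N)%nat /\
    (forall x, D x <-> lbok lo x /\ ubok hi x /\ pcong M N x (nat_el M c)) /\
    infinite D.

Arguments one_cell {M}.

Definition lin_fun (M : PStruct) (A : car M -> Prop) (D : car M -> Prop)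
    (al : car M -> car M) : Prop :=
  exists (s : Z) (k c : nat) (gamma : car M),
    (0 < k)%nat /\ (c < k)%nat /\ dcl A gamma /\
    forall x, D x ->
      pcong M k x (nat_el M c) /\
      nmul k (psub M (al x) gamma) = zmul s (psub M x (nat_el M c)).

Arguments lin_fun {M}.

Definition lbfok (M : PStruct) (o : option (car M -> car M)) (x t : car M) : Prop :=
  match o with Some f => ple M (f x) t | None => True end.
Definition ubfok (M : PStruct) (o : option (car M -> car M)) (x t : car M) : Prop :=
  match o with Some f => ple M t (f x) | None => True end.

Arguments lbfok {M}.
Arguments ubfok {M}.

Definition cell11 (M : PStruct) (A : car M -> Prop)
    (C : car M -> car M -> Prop) : Prop :=
  exists (D : car M -> Prop) (lo hi : option (car M -> car M)) (N k : nat),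
    one_cell A D /\
    (forall f, lo = Some f -> lin_fun A D f) /\
    (forall f, hi = Some f -> lin_fun A D f) /\
    (0 < N)%nat /\ (k < N)%nat /\
    (forall x t, C x t <->
       D x /\ lbfok lo x t /\ ubfok hi x t /\ pcong M N t (nat_el M k)) /\
    ~ (exists n : nat, forall x, D x ->
         exists l : list (car M), (length l <= n)%nat /\
           forall t, C x t -> In t l).

Arguments cell11 {M}.

Definition dim2 (M : PStruct) (A : car M -> Prop) (a b : car M) : Prop :=
  ~ dcl (fun x => A x \/ x = b) a /\ ~ dcl (fun x => A x \/ x = a) b.

Arguments dim2 {M}.

Definition box_factor (M : PStruct) (B : car M -> Prop) (p : car M) : Prop :=
  exists (lo hi : option (car M)) (N c : nat),
    (0 < N)%nat /\ (c < N)%nat /\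
    (forall x, B x <-> lbok lo x /\ ubok hi x /\ pcong M N x (nat_el M c)) /\
    B p /\
    (forall al, lo = Some al -> infinite (fun x => ple M al x /\ ple M x p)) /\
    (forall be, hi = Some be -> infinite (fun x => ple M p x /\ ple M x be)).
Arguments box_factor {M}.

(* Since a is not definable over M0 and b, it lies at a nonstandard distance from the
   M0-definable endpoints of the base cell D; likewise b lies at a nonstandard distance
   from the values at a of the linear functions bounding C, which are definable over M0
   and a. A linear function of slope s/k moves by at most |s| r when its argument moves by
   r, so for every small enough nonstandard r the box [a - r, a + r] x [b - r, b + r], cut
   down to the congruence classes of the cell, lies in C. Such an r exists because Euclidean
   division of a nonstandard gap by a standard integer leaves a nonstandard quotient. Every arithmetic fact used in M is transferred from Z, as M satisfies Th(Z). *)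

From Stdlib Require Import ZArith List Lia Classical Setoid FinFun.
Import ListNotations.

Set Implicit Arguments.

Fixpoint tnmul {T} (n : nat) (t : term T) : term T :=
  match n with O => TZero | S m => TAdd t (tnmul m t) end.

Definition tzmul {T} (s : Z) (t : term T) : term T :=
  match s with
  | Z0 => TZero
  | Zpos p => tnmul (Pos.to_nat p) t
  | Zneg p => TOpp (tnmul (Pos.to_nat p) t)
  end.

Lemma teval_tnmul M T (ip : T -> car M) e n t :
  teval M ip e (tnmul n t) = nmul n (teval M ip e t).
Proof. induction n as [|n IH]; cbn; congruence. Qed.

Lemma teval_tzmul M T (ip : T -> car M) e s t :
  teval M ip e (tzmul s t) = zmul s (teval M ip e t).
Proof. destruct s; cbn; rewrite ?teval_tnmul; reflexivity. Qed.

Lemma nmul_Z n (x : Z) : @nmul Zstruct n x = (Z.of_nat n * x)%Z.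
Proof.
  induction n as [|n IH]; cbn [nmul]; [reflexivity|].
  rewrite IH; cbn [padd Zstruct]; lia.
Qed.

Lemma zmul_Z s (x : Z) : @zmul Zstruct s x = (s * x)%Z.
Proof. destruct s; cbn [zmul]; rewrite ?nmul_Z; cbn [popp pzero Zstruct]; lia. Qed.

Definition env (M : PStruct) (l : list (car M)) (n : nat) : car M := nth n l (pzero M).

Ltac list_index x l :=
  lazymatch l with
  | x :: _ => constr:(O)
  | _ :: ?l' => let i := list_index x l' in constr:(S i)
  end.

Ltac reify_term M l t :=
  lazymatch t with
  | padd M ?u ?v =>
      let u' := reify_term M l u in let v' := reify_term M l v in constr:(TAdd u' v')
  | psub M ?u ?v =>
      let u' := reify_term M l u in let v' := reify_term M l v in
      constr:(TAdd u' (TOpp v'))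
  | popp M ?u => let u' := reify_term M l u in constr:(TOpp u')
  | pzero M => constr:(@TZero Empty_set)
  | pone M => constr:(@TOne Empty_set)
  | nat_el M ?n => constr:(tnmul n (@TOne Empty_set))
  | @nmul M ?n ?u => let u' := reify_term M l u in constr:(tnmul n u')
  | @zmul M ?s ?u => let u' := reify_term M l u in constr:(tzmul s u')
  | _ => let i := list_index t l in constr:(TVar Empty_set i)
  end.

(* An existential is reified under a fresh binder appended to the variable list, so
   that its index is the length of the list. *)
Ltac reify_form M l P :=
  lazymatch P with
  | ~ ?A => let a := reify_form M l A in constr:(FNot a)
  | ?A /\ ?B =>
      let a := reify_form M l A in let b := reify_form M l B in constr:(FAnd a b)
  | ?A \/ ?B =>
      let a := reify_form M l A in let b := reify_form M l B in constr:(FOr a b)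
  | False => constr:(@FFalse Empty_set)
  | @eq (car M) ?u ?v =>
      let u' := reify_term M l u in let v' := reify_term M l v in constr:(FEq u' v')
  | plt M ?u ?v =>
      let u' := reify_term M l u in let v' := reify_term M l v in constr:(FLt u' v')
  | ple M ?u ?v =>
      let u' := reify_term M l u in let v' := reify_term M l v in
      constr:(FOr (FLt u' v') (FEq u' v'))
  | @ex (car M) ?B =>
      let i := eval cbv in (length l) in
      let phi := constr:(fun x : car M =>
        ltac:(let l' := eval cbv [app] in (l ++ [x]) in
              let Bx := eval cbv beta in (B x) in
              let b := reify_form M l' Bx in exact b)) in
      let phi := eval cbv beta in (phi (pzero M)) in
      constr:(FEx i phi)
  | ?A -> ?B =>
      let a := reify_form M l A in let b := reify_form M l B in constr:(FImp a b)
  end.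

Ltac collect_vars M acc :=
  match goal with
  | x : car M |- _ =>
      lazymatch acc with context [x] => fail | _ => collect_vars M (x :: acc) end
  | _ => acc
  end.

Ltac teval_simpl_in H :=
  cbn [sat teval] in H;
  repeat ((setoid_rewrite teval_tnmul in H || setoid_rewrite teval_tzmul in H);
          cbn [teval] in H).

Ltac teval_simpl :=
  cbn [sat teval];
  repeat ((setoid_rewrite teval_tnmul || setoid_rewrite teval_tzmul); cbn [teval]).

(* Proves a first-order goal about the elements of a model [M] of Presburger arithmetic
   from its counterpart in Z, which is left as the new goal. Only the goal is transferred:
   hypotheses about elements of [M] must be premises of the goal, not of the context. *)
Ltac transfer HM :=
  lazymatch type of HM with presburger_model ?M =>
  lazymatch goal with |- ?P =>
    let l := collect_vars M (@nil (car M)) in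
    let phi := reify_form M l P in
    let HZ := fresh "HZ" in
    enough (HZ : forall e, sat Zstruct (noparam Zstruct) e phi);
    [ let HP := fresh "HP" in
      pose proof (HM phi HZ (env M l)) as HP;
      teval_simpl_in HP; cbn [env nth upd Nat.eqb] in HP; exact HP
    | let e := fresh "e" in
      intro e; teval_simpl;
      cbn [Zstruct padd popp pzero pone plt upd Nat.eqb];
      try setoid_rewrite nmul_Z; try setoid_rewrite zmul_Z;
      try setoid_rewrite <- Z.le_lteq ]
  end end.

(* The two facts below are stated in the exact shape of the goals left by [transfer]. *)
Lemma Z_floor_div m u v :
  (0 < m)%Z -> exists q, (u + m * q <= v)%Z /\ (v < u + m * q + m * 1)%Z.
Proof.
  intros Hm; exists ((v - u) / m)%Z.
  pose proof (Z.div_mod (v - u) m ltac:(lia)); pose proof (Z.mod_pos_bound (v - u) m Hm).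
  lia.
Qed.

Lemma Z_lipschitz k s x a u l r :
  (0 < k)%Z -> (k * (u + - l) = s * (x + - a))%Z -> (a + - r <= x)%Z -> (x <= a + r)%Z ->
  (l + - (Z.abs s * r) <= u)%Z /\ (u <= l + Z.abs s * r)%Z.
Proof.
  intros Hk Hd Hx1 Hx2.
  assert (Habs : (k * Z.abs (u - l) = Z.abs s * Z.abs (x - a))%Z).
  { rewrite <- (Z.abs_eq k), <- !Z.abs_mul by lia. f_equal; lia. }
  assert (Hxa : (Z.abs (x - a) <= r)%Z) by lia.
  pose proof (Z.abs_nonneg s); pose proof (Z.abs_nonneg (u - l)).
  assert (Z.abs (u - l) <= Z.abs s * r)%Z by nia.
  lia.
Qed.

Lemma infinite_of_seq {M : PStruct} {P : car M -> Prop} (g : nat -> car M) :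
  (forall i, P (g i)) -> (forall i j, i <> j -> g i <> g j) -> infinite P.
Proof.
  intros HP Hg [l Hl].
  assert (Hinj : Injective g).
  { intros i j E. destruct (Nat.eq_dec i j) as [|Hij]; [assumption|].
    exfalso; exact (Hg i j Hij E). }
  assert (Hincl : incl (map g (seq 0 (S (length l)))) l).
  { intros x Hx. apply in_map_iff in Hx as [i [<- _]]. apply Hl, HP. }
  pose proof (NoDup_incl_length (Injective_map_NoDup Hinj (seq_NoDup _ 0)) Hincl) as Hlen.
  rewrite length_map, length_seq in Hlen. lia.
Qed.

(* [fcollapse bs phi] renames the free variables of [phi] (those not in [bs]) to 0 and
   shifts the bound ones up by one: under [sat1] every free variable denotes the same
   point, so [fcollapse [] phi] is [phi] with that point moved to variable 0. *)
Fixpoint tcollapse {T} (bs : list nat) (t : term T) : term T :=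
  match t with
  | TVar _ n => if in_dec Nat.eq_dec n bs then TVar _ (S n) else TVar _ 0
  | TPar p => TPar p
  | TZero => TZero
  | TOne => TOne
  | TAdd u v => TAdd (tcollapse bs u) (tcollapse bs v)
  | TOpp u => TOpp (tcollapse bs u)
  end.

Fixpoint fcollapse {T} (bs : list nat) (f : form T) : form T :=
  match f with
  | FEq u v => FEq (tcollapse bs u) (tcollapse bs v)
  | FLt u v => FLt (tcollapse bs u) (tcollapse bs v)
  | FCong n u v => FCong n (tcollapse bs u) (tcollapse bs v)
  | FFalse => FFalse
  | FNot g => FNot (fcollapse bs g)
  | FAnd g h => FAnd (fcollapse bs g) (fcollapse bs h)
  | FOr g h => FOr (fcollapse bs g) (fcollapse bs h)
  | FImp g h => FImp (fcollapse bs g) (fcollapse bs h)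
  | FEx i g => FEx (S i) (fcollapse (i :: bs) g)
  | FAll i g => FAll (S i) (fcollapse (i :: bs) g)
  end.

Section Collapse.

Variables (M : PStruct) (T : Type) (ip : T -> car M).

Definition collapsed (bs : list nat) (e e' : nat -> car M) : Prop :=
  (forall n, In n bs -> e' (S n) = e n) /\ (forall n, ~ In n bs -> e n = e' 0%nat).

Lemma collapsed_upd bs e e' i x :
  collapsed bs e e' -> collapsed (i :: bs) (upd M e i x) (upd M e' (S i) x).
Proof.
  intros [Hb Hf]; split; intros n Hn; unfold upd; cbn [Nat.eqb];
    destruct (Nat.eqb_spec n i) as [->|Hni]; try reflexivity.
  - apply Hb. destruct Hn as [->|]; [contradiction|assumption].
  - exfalso; apply Hn; left; reflexivity.
  - apply Hf. intros Hin; apply Hn; right; exact Hin.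
Qed.

Lemma teval_tcollapse bs e e' t :
  collapsed bs e e' -> teval M ip e' (tcollapse bs t) = teval M ip e t.
Proof.
  intros [Hb Hf]; induction t as [n| | | |u IHu v IHv|u IHu]; cbn; try congruence.
  destruct (in_dec Nat.eq_dec n bs) as [Hn|Hn]; [apply Hb | symmetry; apply Hf]; exact Hn.
Qed.

Lemma sat_fcollapse phi : forall bs e e',
  collapsed bs e e' -> (sat M ip e' (fcollapse bs phi) <-> sat M ip e phi).
Proof.
  induction phi as [u v|u v|n u v| |g IHg|g IHg h IHh|g IHg h IHh|g IHg h IHh|i g IHg|i g IHg];
    intros bs e e' Hc; cbn [fcollapse sat]; repeat rewrite (teval_tcollapse _ Hc);
    try rewrite (IHg _ _ _ Hc); try rewrite (IHh _ _ _ Hc); try reflexivity.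
  - split; intros [x Hx]; exists x; apply (IHg _ _ _ (collapsed_upd i x Hc)); exact Hx.
  - split; intros Hx x; apply (IHg _ _ _ (collapsed_upd i x Hc)); exact (Hx x).
Qed.

End Collapse.

Lemma tparams_in_mono T (A B : T -> Prop) t :
  (forall p, A p -> B p) -> tparams_in A t -> tparams_in B t.
Proof. intros HAB; induction t; cbn; intuition. Qed.

Lemma fparams_in_mono T (A B : T -> Prop) phi :
  (forall p, A p -> B p) -> fparams_in A phi -> fparams_in B phi.
Proof. intros HAB; induction phi; cbn; intuition eauto using tparams_in_mono. Qed.

Lemma tparams_in_tcollapse T (A : T -> Prop) bs t :
  tparams_in A t -> tparams_in A (tcollapse bs t).
Proof. induction t; cbn; try destruct in_dec; cbn; intuition. Qed.

Lemma fparams_in_fcollapse T (A : T -> Prop) phi :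
  forall bs, fparams_in A phi -> fparams_in A (fcollapse bs phi).
Proof. induction phi; cbn; intuition eauto using tparams_in_tcollapse. Qed.

Lemma tparams_in_tnmul T (A : T -> Prop) n t : tparams_in A t -> tparams_in A (tnmul n t).
Proof. intros Ht; induction n; cbn; tauto. Qed.

Lemma tparams_in_nat T (A : T -> Prop) n : tparams_in A (tnmul n TOne).
Proof. apply tparams_in_tnmul; exact I. Qed.

Lemma tparams_in_tzmul T (A : T -> Prop) s t : tparams_in A t -> tparams_in A (tzmul s t).
Proof. intros Ht; destruct s; cbn; auto using tparams_in_tnmul. Qed.

Declare Scope pres_scope.

Section PresburgerModel.

Variable M : PStruct.

Local Notation "0" := (pzero M) : pres_scope.
Local Notation "x + y" := (padd M x y) : pres_scope.
Local Notation "x - y" := (psub M x y) : pres_scope.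
Local Notation "- x" := (popp M x) : pres_scope.
Local Notation "x <= y" := (ple M x y) : pres_scope.
Local Notation "x < y" := (plt M x y) : pres_scope.
Local Notation "n %:M" := (nat_el M n%nat)
  (at level 2, left associativity, format "n %:M") : pres_scope.
Local Notation "n *: x" := (nmul n%nat x) (at level 40) : pres_scope.
Local Notation "s *~ x" := (zmul s%Z x) (at level 40) : pres_scope.
Local Open Scope pres_scope.

Hypothesis HM : presburger_model M.

Lemma ple_trans {x y z} : x <= y -> y <= z -> x <= z.
Proof. transfer HM; lia. Qed.

Lemma ple_total x y : x <= y \/ y <= x.
Proof. transfer HM; lia. Qed.

Lemma padd_cancel x y w : y + w = x + w -> y = x.
Proof. transfer HM; lia. Qed.

Lemma nmul_sub_inj k (Hk : (0 < k)%nat) x y g : k *: (y - g) = k *: (x - g) -> y = x.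
Proof. transfer HM; nia. Qed.

Lemma padd_nat_inj i j (Hij : i <> j) x : x + i%:M <> x + j%:M.
Proof. transfer HM; lia. Qed.

Lemma ple_add_nat0 {u v} : u <= v -> u + 0%:M <= v.
Proof. transfer HM; lia. Qed.

Lemma ple_add_nat_succ {n u v} : u + n%:M <= v -> v <> u + n%:M -> u + (S n)%:M <= v.
Proof. transfer HM; lia. Qed.

Lemma floor_div m (Hm : (0 < m)%nat) u v : exists q, u + m *: q <= v /\ v < u + m *: q + m%:M.
Proof.
  transfer HM; apply Z_floor_div; lia.
Qed.

Lemma floor_div_ge m n (Hm : (0 < m)%nat) {u v q} :
  v < u + m *: q + m%:M -> u + (m * n)%:M <= v -> 0 + n%:M <= q.
Proof. transfer HM; rewrite Nat2Z.inj_mul; nia. Qed.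

Lemma nmul_ple_mono {m u v q r} : u + m *: q <= v -> r <= q -> u + m *: r <= v.
Proof. transfer HM; nia. Qed.

Lemma ple_sub_add {a r} : 0 + 0%:M <= r -> a - r <= a /\ a <= a + r.
Proof. transfer HM; lia. Qed.

Lemma ple_add_nat n x : x <= x + n%:M.
Proof. transfer HM; lia. Qed.

Lemma ple_sub_add_nat {n a r} : 0 + n%:M <= r -> a - r + n%:M <= a.
Proof. transfer HM; lia. Qed.

Lemma ple_add_nat_add {n a r} : 0 + n%:M <= r -> a + n%:M <= a + r.
Proof. transfer HM; lia. Qed.

Lemma nat_ple_opp {n a} : a + n%:M <= 0 -> 0 + n%:M <= - a.
Proof. transfer HM; lia. Qed.

Lemma ple_of_margin_below {l a r x} : l + 1 *: r <= a -> a - r <= x -> l <= x.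
Proof. transfer HM; lia. Qed.

Lemma ple_of_margin_above {h a r x} : a + 1 *: r <= h -> x <= a + r -> x <= h.
Proof. transfer HM; lia. Qed.

Lemma lin_fun_diff {s k c g x a u l} :
  k *: (u - g) = s *~ (x - c%:M) -> k *: (l - g) = s *~ (a - c%:M) ->
  k *: (u - l) = s *~ (x - a).
Proof. transfer HM; lia. Qed.

Lemma nmul_lipschitz {s k} (Hk : (0 < k)%nat) {x a u l r} :
  k *: (u - l) = s *~ (x - a) -> a - r <= x -> x <= a + r ->
  l - (Z.abs_nat s) *: r <= u /\ u <= l + (Z.abs_nat s) *: r.
Proof.
  transfer HM; rewrite Zabs2Nat.id_abs; intros.
  eapply Z_lipschitz; eauto; lia.
Qed.

Lemma ple_of_lin_margin_below {m u l b r t} :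
  u <= l + m *: r -> l + (S m) *: r <= b -> b - r <= t -> u <= t.
Proof. transfer HM; lia. Qed.

Lemma ple_of_lin_margin_above {m u h b r t} :
  h - m *: r <= u -> b + (S m) *: r <= h -> t <= b + r -> t <= u.
Proof. transfer HM; lia. Qed.

Lemma dcl_mono (A B : car M -> Prop) x : (forall p, A p -> B p) -> dcl A x -> dcl B x.
Proof. intros HAB [phi [Hphi Hx]]; exists phi; eauto using fparams_in_mono. Qed.

Lemma dcl_trans (A : car M -> Prop) g x : dcl A g ->
  (exists psi, fparams_in A psi /\
     forall y, sat M (fun p => p) (upd M (fun _ => y) 0%nat g) psi <-> y = x) ->
  dcl A x.
Proof.
  intros [phi [Hphi Hg]] [psi [Hpsi Hx]].
  exists (FEx 0 (FAnd (fcollapse [] phi) psi)); split.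
  - cbn; split; [apply fparams_in_fcollapse|]; assumption.
  - intro y; unfold sat1; cbn [sat].
    assert (Hz : forall z,
      sat M (fun p => p) (upd M (fun _ => y) 0%nat z) (fcollapse [] phi) <-> z = g).
    { intro z; rewrite (@sat_fcollapse M _ (fun p => p) phi [] (fun _ => z)); [apply Hg|].
      split; [intros n []|reflexivity]. }
    split.
    + intros [z [Hphiz Hpsiz]]; apply Hz in Hphiz; subst z; apply Hx; exact Hpsiz.
    + intros Hy; exists g; split; [apply Hz | apply Hx]; trivial.
Qed.

Lemma dcl_zero (A : car M -> Prop) : dcl A 0.
Proof. exists (FEq (TVar _ 0) TZero); split; [cbn; tauto | reflexivity]. Qed.

Lemma dcl_add_nat {A : car M -> Prop} {u n} : dcl A u -> dcl A (u + n%:M).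
Proof.
  intros Hu; apply (dcl_trans Hu).
  exists (FEq (TVar _ 1) (TAdd (TVar _ 0) (tnmul n TOne))); split.
  - cbn; intuition (auto using tparams_in_nat).
  - intro y; teval_simpl; reflexivity.
Qed.

Lemma dcl_of_add_nat {A : car M -> Prop} {u n} : dcl A (u + n%:M) -> dcl A u.
Proof.
  intros Hu; apply (dcl_trans Hu).
  exists (FEq (TAdd (TVar _ 1) (tnmul n TOne)) (TVar _ 0)); split.
  - cbn; intuition (auto using tparams_in_nat).
  - intro y; teval_simpl; split; [apply padd_cancel | intros ->; reflexivity].
Qed.

Lemma dcl_lin_fun {A D : car M -> Prop} {F : car M -> car M} {x} :
  lin_fun A D F -> D x -> dcl (fun y => A y \/ y = x) (F x).
Proof.
  intros (s & k & c & g & Hk & _ & Hg & HF) Hx.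
  apply (dcl_trans (dcl_mono _ (fun p Hp => or_introl Hp) Hg)).
  exists (FEq (tnmul k (TAdd (TVar _ 1) (TOpp (TVar _ 0))))
              (tzmul s (TAdd (TPar x) (TOpp (tnmul c TOne))))); split.
  - split; [apply tparams_in_tnmul | apply tparams_in_tzmul]; cbn; auto using tparams_in_nat.
  - intro y; teval_simpl. destruct (HF x Hx) as [_ Ex].
    split; [|intros ->; exact Ex].
    intros Ey; apply (@nmul_sub_inj k Hk (F x) y g); rewrite Ex; exact Ey.
Qed.

Definition nonstd_gap u v : Prop := forall n, u + n%:M <= v.

Definition nonstd r : Prop := nonstd_gap 0 r.

Lemma standard_gap u v : u <= v -> ~ nonstd_gap u v -> exists n, v = u + n%:M.
Proof.
  intros Huv Hgap; apply NNPP; intros Hne; apply Hgap; intro n.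
  induction n as [|n IH]; [exact (ple_add_nat0 Huv)|].
  apply ple_add_nat_succ; [exact IH|]. intros E; apply Hne; exists n; exact E.
Qed.

Lemma nonstd_gap_dcl_l (A : car M -> Prop) u v :
  dcl A u -> ~ dcl A v -> u <= v -> nonstd_gap u v.
Proof.
  intros Hu Hv Huv; apply NNPP; intros Hgap.
  destruct (standard_gap Huv Hgap) as [n ->]; exact (Hv (dcl_add_nat Hu)).
Qed.

Lemma nonstd_gap_dcl_r (A : car M -> Prop) u v :
  ~ dcl A u -> dcl A v -> u <= v -> nonstd_gap u v.
Proof.
  intros Hu Hv Huv; apply NNPP; intros Hgap.
  destruct (standard_gap Huv Hgap) as [n ->]; exact (Hu (dcl_of_add_nat Hv)).
Qed.

Lemma exists_nonstd (A : car M -> Prop) a : ~ dcl A a -> exists r, nonstd r.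
Proof.
  intros Ha; destruct (ple_total 0 a) as [H|H].
  - exists a; exact (nonstd_gap_dcl_l (dcl_zero A) Ha H).
  - exists (- a); intro n; apply nat_ple_opp; exact (nonstd_gap_dcl_r Ha (dcl_zero A) H n).
Qed.

Lemma nonstd_floor_div m (Hm : (0 < m)%nat) u v :
  nonstd_gap u v -> exists q, nonstd q /\ u + m *: q <= v.
Proof.
  intros Hgap; destruct (floor_div Hm u v) as [q [Hq Hvq]].
  exists q; split; [intro n; exact (floor_div_ge n Hm Hvq (Hgap (m * n)%nat))|exact Hq].
Qed.

(* The filter of properties of all sufficiently small nonstandard positive elements. *)
Definition small_enough (Q : car M -> Prop) : Prop :=
  forall r0, nonstd r0 ->
  exists r, nonstd r /\ r <= r0 /\ forall r', nonstd r' -> r' <= r -> Q r'.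

Lemma small_enough_all (Q : car M -> Prop) : (forall r, Q r) -> small_enough Q.
Proof. intros HQ r0 Hr0; exists r0; repeat split; auto. right; reflexivity. Qed.

Lemma small_enough_mono (Q Q' : car M -> Prop) :
  (forall r, nonstd r -> Q r -> Q' r) -> small_enough Q -> small_enough Q'.
Proof.
  intros HQQ' HQ r0 Hr0; destruct (HQ r0 Hr0) as (r & Hr & Hrr0 & Hsmall).
  exists r; repeat split; auto.
Qed.

Lemma small_enough_and (Q1 Q2 : car M -> Prop) :
  small_enough Q1 -> small_enough Q2 -> small_enough (fun r => Q1 r /\ Q2 r).
Proof.
  intros HQ1 HQ2 r0 Hr0.
  destruct (HQ1 r0 Hr0) as (r1 & Hr1 & Hr10 & H1).
  destruct (HQ2 r1 Hr1) as (r2 & Hr2 & Hr21 & H2).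
  exists r2; repeat split; eauto using ple_trans.
Qed.

Lemma small_enough_margin m (Hm : (0 < m)%nat) u v :
  nonstd_gap u v -> small_enough (fun r => u + m *: r <= v).
Proof.
  intros Hgap r0 Hr0; destruct (nonstd_floor_div Hm Hgap) as (q & Hq & Huq).
  destruct (ple_total q r0) as [Hqr0|Hr0q].
  - exists q; repeat split; auto. intros r' _ Hr'; exact (nmul_ple_mono Huq Hr').
  - exists r0; repeat split; auto; [right; reflexivity|].
    intros r' _ Hr'; exact (nmul_ple_mono Huq (ple_trans Hr' Hr0q)).
Qed.

Lemma small_enough_witness (Q : car M -> Prop) :
  small_enough Q -> (exists r0, nonstd r0) -> exists r, nonstd r /\ Q r.
Proof.
  intros HQ [r0 Hr0]; destruct (HQ r0 Hr0) as (r & Hr & _ & Hsmall).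
  exists r; split; [|apply Hsmall; [|right; reflexivity]]; exact Hr.
Qed.

Lemma small_enough_lbok (A : car M -> Prop) lo a :
  (forall l, lo = Some l -> dcl A l) -> ~ dcl A a -> lbok lo a ->
  small_enough (fun r => forall x, a - r <= x -> lbok lo x).
Proof.
  destruct lo as [l|]; intros Hl Ha Hla; [|apply small_enough_all; constructor].
  apply (small_enough_mono (Q := fun r => l + 1 *: r <= a)).
  - intros r _ Hr x Hx; exact (ple_of_margin_below Hr Hx).
  - exact (small_enough_margin (Nat.lt_0_1) (nonstd_gap_dcl_l (Hl l eq_refl) Ha Hla)).
Qed.

Lemma small_enough_ubok (A : car M -> Prop) hi a :
  (forall h, hi = Some h -> dcl A h) -> ~ dcl A a -> ubok hi a ->
  small_enough (fun r => forall x, x <= a + r -> ubok hi x).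
Proof.
  destruct hi as [h|]; intros Hh Ha Hah; [|apply small_enough_all; constructor].
  apply (small_enough_mono (Q := fun r => a + 1 *: r <= h)).
  - intros r _ Hr x Hx; exact (ple_of_margin_above Hr Hx).
  - exact (small_enough_margin (Nat.lt_0_1) (nonstd_gap_dcl_r Ha (Hh h eq_refl) Hah)).
Qed.

Lemma small_enough_lbfok (A D : car M -> Prop) lo a b :
  (forall F, lo = Some F -> lin_fun A D F) -> D a ->
  ~ dcl (fun y => A y \/ y = a) b -> lbfok lo a b ->
  small_enough (fun r => forall x t,
    D x -> a - r <= x -> x <= a + r -> b - r <= t -> lbfok lo x t).
Proof.
  destruct lo as [F|]; intros HF Ha Hb Hab; [|apply small_enough_all; constructor].
  destruct (HF F eq_refl) as (s & k & c & g & Hk & _ & _ & HFD).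
  pose proof (nonstd_gap_dcl_l (dcl_lin_fun (HF F eq_refl) Ha) Hb Hab) as Hgap.
  apply (small_enough_mono (Q := fun r => F a + (S (Z.abs_nat s)) *: r <= b)).
  - intros r _ Hr x t Hx Hx1 Hx2 Ht.
    destruct (HFD x Hx) as [_ Ex], (HFD a Ha) as [_ Ea].
    destruct (nmul_lipschitz Hk (lin_fun_diff Ex Ea) Hx1 Hx2) as [_ Hclose].
    exact (ple_of_lin_margin_below Hclose Hr Ht).
  - exact (small_enough_margin (Nat.lt_0_succ _) Hgap).
Qed.

Lemma small_enough_ubfok (A D : car M -> Prop) hi a b :
  (forall F, hi = Some F -> lin_fun A D F) -> D a ->
  ~ dcl (fun y => A y \/ y = a) b -> ubfok hi a b ->
  small_enough (fun r => forall x t,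
    D x -> a - r <= x -> x <= a + r -> t <= b + r -> ubfok hi x t).
Proof.
  destruct hi as [F|]; intros HF Ha Hb Hab; [|apply small_enough_all; constructor].
  destruct (HF F eq_refl) as (s & k & c & g & Hk & _ & _ & HFD).
  pose proof (nonstd_gap_dcl_r Hb (dcl_lin_fun (HF F eq_refl) Ha) Hab) as Hgap.
  apply (small_enough_mono (Q := fun r => b + (S (Z.abs_nat s)) *: r <= F a)).
  - intros r _ Hr x t Hx Hx1 Hx2 Ht.
    destruct (HFD x Hx) as [_ Ex], (HFD a Ha) as [_ Ea].
    destruct (nmul_lipschitz Hk (lin_fun_diff Ex Ea) Hx1 Hx2) as [Hclose _].
    exact (ple_of_lin_margin_above Hclose Hr Ht).
  - exact (small_enough_margin (Nat.lt_0_succ _) Hgap).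
Qed.

Definition cinterval p r N c : car M -> Prop :=
  fun x => lbok (Some (p - r)) x /\ ubok (Some (p + r)) x /\ pcong M N x c%:M.

Lemma infinite_below p r : nonstd r -> infinite (fun x => p - r <= x /\ x <= p).
Proof.
  intros Hr; apply (infinite_of_seq (fun i => p - r + i%:M)).
  - intro i; split; [apply ple_add_nat | exact (ple_sub_add_nat (Hr i))].
  - intros i j Hij; exact (padd_nat_inj Hij _).
Qed.

Lemma infinite_above p r : nonstd r -> infinite (fun x => p <= x /\ x <= p + r).
Proof.
  intros Hr; apply (infinite_of_seq (fun i => p + i%:M)).
  - intro i; split; [apply ple_add_nat | exact (ple_add_nat_add (Hr i))].
  - intros i j Hij; exact (padd_nat_inj Hij _).
Qed.

Lemma box_factor_cinterval p r N c :
  (0 < N)%nat -> (c < N)%nat -> pcong M N p c%:M -> nonstd r ->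
  box_factor (cinterval p r N c) p.
Proof.
  intros HN Hc Hp Hr; destruct (@ple_sub_add p r (Hr 0%nat)) as [Hlo Hhi].
  exists (Some (p - r)), (Some (p + r)), N, c.
  split; [exact HN|]; split; [exact Hc|]; split; [intro; reflexivity|].
  split; [repeat split; assumption|].
  split; intros e [= <-]; [exact (infinite_below Hr) | exact (infinite_above Hr)].
Qed.

End PresburgerModel.

Theorem lemma3p3 (M M0 : PStruct) (f : car M0 -> car M)
  (HM : presburger_model M) (Hsat : saturated M)
  (Hel : elem_emb M0 M f) (Hsmall : smaller M (car M0))
  (C : car M -> car M -> Prop) (HC : cell11 (img f) C)
  (a b : car M) (Hab : C a b) (Hdim : dim2 (img f) a b) :
  exists B1 B2 : car M -> Prop,
    box_factor B1 a /\ box_factor B2 b /\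
    (forall x t, B1 x -> B2 t -> C x t).
Proof.
  destruct HC as (D & lo & hi & N & k & HD & Hlo & Hhi & HN & Hk & HC & _).
  destruct HD as (loD & hiD & ND & cD & HloD & HhiD & HND & HcD & HD & _).
  destruct Hdim as [Ha Hb].
  assert (Ha' : ~ dcl (img f) a)
    by (contradict Ha; exact (dcl_mono _ (fun p Hp => or_introl Hp) Ha)).
  destruct (proj1 (HC a b) Hab) as (HDa & Hloa & Hhia & Hkb).
  destruct (proj1 (HD a) HDa) as (HloDa & HhiDa & HcDa).
  destruct (small_enough_witness
    (small_enough_and HM (small_enough_lbok HM HloD Ha' HloDa)
    (small_enough_and HM (small_enough_ubok HM HhiD Ha' HhiDa)
    (small_enough_and HM (small_enough_lbfok HM Hlo HDa Hb Hloa)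
                      (small_enough_ubfok HM Hhi HDa Hb Hhia))))
    (exists_nonstd HM Ha')) as (r & Hr & HlbD & HubD & Hlb & Hub).
  exists (cinterval M a r ND cD), (cinterval M b r N k).
  split; [|split]; [apply box_factor_cinterval; assumption..|].
  intros x t (Hx1 & Hx2 & Hx3) (Ht1 & Ht2 & Ht3); cbn in *.
  assert (HDx : D x) by (apply HD; auto).
  apply HC; auto.
Qed.
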